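(* Let $V$ be a finite set and $\mu\colon\binom V2\to\mathbb{Z}_+$ such that the graph $G(\mu)$ is connected. Let $V'\subseteq V$ be a nonempty subset such that the induced subgraph $G(\mu)|_{V'}$ is connected. Then $n(\mu,V)\geqslant n(\mu,V')$, where $n(\mu,V')$ is computed for the restriction of $\mu$ to $\binom{V'}{2}$.
   Context: $G(\mu)$ is the simple graph on $V$ whose edges are the pairs $e\in\binom V2$ with $\mu(e)>1$. For a finite set $W$ with $|W|=m$ and $\mu\colon\binom W2\to\mathbb{Z}_+$, $n(\mu,W)=\sum_{J\subseteq W,|J|\geqslant2}(-1)^{m-|J|}\prod_{e\in\binom J2}\mu(e)+(-1)^{m-1}(m-1)$ (the number of spheres in a wedge homotopy equivalent to the edge inflation of the simplex on $W$). *)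

From mathcomp Require Import all_boot all_order all_algebra.
Set Implicit Arguments. Unset Strict Implicit. Unset Printing Implicit Defensive.
Import GRing.Theory Num.Theory.
Local Open Scope ring_scope.

(* A multiplicity function mu : binom(V,2) -> Z_+ is modelled as a function
   on {set T}; only its values on 2-element sets matter. *)

Definition positive_mult (T : finType) (mu : {set T} -> nat) : Prop :=
  forall e : {set T}, #|e| = 2%N -> (0 < mu e)%N.

Definition Gmu_edge (T : finType) (mu : {set T} -> nat) : rel T :=
  fun x y => (x != y) && (1 < mu [set x; y])%N.

Definition induced_connected (T : finType) (mu : {set T} -> nat) (W : {set T})
  : Prop :=
  forall x y, x \in W -> y \in W ->
    exists p : seq T, [/\ path (Gmu_edge mu) x p, last x p = y & all (mem W) p].

Definition pairs (T : finType) (J : {set T}) : {set {set T}} :=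
  [set e in powerset J | #|e| == 2%N].

Definition nmu (T : finType) (mu : {set T} -> nat) (W : {set T}) : int :=
  let m := #|W| in
  \sum_(J in powerset W | (2 <= #|J|)%N)
      (-1) ^+ (m - #|J|) * (\prod_(e in pairs J) mu e)%:Z
  + (-1) ^+ (m.-1) * (m%:Z - 1).

(* Writing mu e = 1 + (mu e - 1), expanding the products and applying
   inclusion-exclusion over J shows that n(mu, W) is the sum, over the edge
   sets F of the complete graph on W that cover W, of the nonnegative weights
   prod_(e in F) (mu e - 1).  Let S be the set of edges of G(mu) leaving V';
   its weight is at least 1, and by connectivity of G(mu) it covers every
   vertex outside V'.  Hence F |-> F :|: S injects the covers of V' into the
   covers of V without decreasing weights. *)

From mathcomp Require Import all_boot all_order all_algebra.
From mathcomp Require Import ring.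
Set Implicit Arguments. Unset Strict Implicit. Unset Printing Implicit Defensive.
Import Order.TTheory GRing.Theory Num.Theory.
Local Open Scope ring_scope.

Lemma prodrD1_powerset (R : comPzSemiRingType) (I : finType) (A : {set I}) (f : I -> R) :
  \prod_(i in A) (f i + 1) = \sum_(B in powerset A) \prod_(i in B) f i.
Proof.
rewrite big_mkcond (eq_bigr (fun i => (if i \in A then f i else 0) + 1)) => [|i _];
  last by case: ifP; rewrite ?add0r.
rewrite bigA_distr (bigID (mem (powerset A))) /=.
rewrite [X in _ + X]big1 ?addr0 => [|B]; last first.
  rewrite powersetE => /subsetPn[i iB iA].
  by rewrite (bigD1 i) //= iB (negPf iA) mul0r.
apply: eq_bigr => B; rewrite powersetE => /subsetP sBA.
rewrite [RHS]big_mkcond; apply: eq_bigr => i _.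
by case: ifP => // /sBA ->.
Qed.

Lemma sum_powerset_sign (R : comPzRingType) (T : finType) (A : {set T}) :
  \sum_(B in powerset A) (-1) ^+ #|B| = (A == set0)%:R :> R.
Proof.
have := @prodrD1_powerset R _ A (fun=> -1).
rewrite addNr prodr_const expr0n cards_eq0 => ->.
by apply: eq_bigr => B _; rewrite prodr_const.
Qed.

Lemma sum_supersets_sign (R : comPzRingType) (T : finType) (K W : {set T}) :
  K \subset W ->
  \sum_(J in powerset W | K \subset J) (-1) ^+ (#|W| - #|J|) = (K == W)%:R :> R.
Proof.
move=> sKW.
have setDDK (B : {set T}) : B \subset W -> W :\: (W :\: B) = B.
  by move=> sBW; rewrite setDDr setDv set0U (setIidPr sBW).
have sDKW (B : {set T}) : B \in powerset (W :\: K) -> B \subset W.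
  by rewrite powersetE => /subset_trans; apply; apply: subsetDl.
rewrite (eq_bigl (fun J => J \in setD W @: powerset (W :\: K))) => [|J]; last first.
  apply/andP/imsetP => [[]|[B sB ->]].
    rewrite powersetE => sJW sKJ; exists (W :\: J); last by rewrite setDDK.
    by rewrite powersetE setDS.
  split; first by rewrite powersetE subsetDl.
  rewrite powersetE subsetD in sB; case/andP: sB => _ dBK.
  by rewrite subsetD sKW disjoint_sym.
rewrite big_imset => [|B1 B2 /sDKW sB1 /sDKW sB2 eqB]; last first.
  by rewrite -(setDDK _ sB1) eqB setDDK.
have -> : (K == W) = (W :\: K == set0) by rewrite setD_eq0 eqEsubset sKW.
rewrite -sum_powerset_sign; apply: eq_bigr => B /sDKW sBW.
by rewrite cardsDS // subKn // subset_leq_card.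
Qed.

Lemma sum_powerset_card (R : nmodType) (T : finType) (W : {set T}) (g : nat -> R) :
  \sum_(J in powerset W) g #|J| = \sum_(k < #|W|.+1) g k *+ 'C(#|W|, k).
Proof.
rewrite (partition_big (fun J : {set T} => inord #|J| : 'I_#|W|.+1) predT) //.
apply: eq_bigr => k _.
rewrite (eq_bigl (fun J => J \in [set A : {set T} | A \subset W & #|A| == k])) => [|J];
  last first.
  rewrite !inE; case: (boolP (J \subset W)) => //= sJW.
  have ltJW : (#|J| < #|W|.+1)%N by rewrite ltnS subset_leq_card.
  apply/eqP/eqP => [<-|eqJk]; first by rewrite inordK.
  by apply: val_inj; rewrite /= inordK // eqJk.
rewrite (eq_bigr (fun _ => g k)) => [|J];
  last by rewrite inE => /andP[_ /eqP ->].
by rewrite sumr_const cards_draws.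
Qed.

Lemma pairs_small (T : finType) (J : {set T}) : (#|J| < 2)%N -> pairs J = set0.
Proof.
move=> ltJ2; apply/setP => e; rewrite !inE.
apply/negP => /andP[/subset_leq_card leJ /eqP e2].
by move: (leq_ltn_trans leJ ltJ2); rewrite e2.
Qed.

Lemma nmu_sum_powerset (T : finType) (mu : {set T} -> nat) (W : {set T}) :
  W != set0 ->
  nmu mu W =
    \sum_(J in powerset W) (-1) ^+ (#|W| - #|J|) * (\prod_(e in pairs J) mu e)%:Z.
Proof.
rewrite -card_gt0 /nmu => W_gt0.
rewrite [RHS](bigID (fun J : {set T} => (2 <= #|J|)%N)) /=; congr (_ + _).
(* The correction term of nmu is the contribution of the J with #|J| < 2,
   for which pairs J is empty. *)
pose small k : int := if (k < 2)%N then (-1) ^+ (#|W| - k) else 0.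
rewrite big_mkcondr /= (eq_bigr (fun J : {set T} => small #|J|)) => [|J _]; last first.
  by rewrite /small -ltnNge; case: ifP => // lt2; rewrite pairs_small // big_set0 mulr1.
rewrite sum_powerset_card /small; move: W_gt0; case: #|W| => // m _.
rewrite !big_ord_recl big1 => [|i _]; last by rewrite /= mul0rn.
rewrite /bump /= subn0 bin0 bin1 subSS subn0 addr0 exprS.
rewrite -[X in _ = _ + X]mulr_natr -[X in _ = X + _]mulr_natr -[(m.+1)%:Z]natz.
ring.
Qed.

Section EdgeCovers.

Variable T : finType.
Implicit Types (mu : {set T} -> nat) (J W : {set T}) (F S : {set {set T}}).

Definition edge_covers W : {set {set {set T}}} :=
  [set F in powerset (pairs W) | cover F == W].

Definition edge_weight mu F : int := \prod_(e in F) ((mu e)%:Z - 1).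

Lemma pairsS J W : J \subset W -> pairs J \subset pairs W.
Proof.
move=> sJW; apply/subsetP => e; rewrite !inE => /andP[seJ ->].
by rewrite (subset_trans seJ sJW).
Qed.

Lemma cover_pairs W F : F \subset pairs W -> cover F \subset W.
Proof. by move=> sFW; apply/bigcupsP => e /(subsetP sFW); rewrite !inE => /andP[]. Qed.

Lemma prod_mult_expand mu J :
  (\prod_(e in pairs J) mu e)%:Z = \sum_(F in powerset (pairs J)) edge_weight mu F.
Proof.
rewrite (big_morph Posz PoszM (erefl 1%:Z)) -prodrD1_powerset.
by apply: eq_bigr => e _; rewrite subrK.
Qed.

Lemma powerset_pairs_sub J W F : J \subset W ->
  (F \in powerset (pairs J)) = (F \in powerset (pairs W)) && (cover F \subset J).
Proof.
move=> sJW; rewrite !powersetE; apply/idP/andP => [sFJ | [sFW sFJ]].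
  by rewrite cover_pairs // (subset_trans sFJ (pairsS sJW)).
apply/subsetP => e eF; move/subsetP/(_ e eF): sFW.
by rewrite !inE => /andP[_ ->]; rewrite (subset_trans (bigcup_sup e eF)).
Qed.

Lemma nmu_edge_covers mu W : W != set0 ->
  nmu mu W = \sum_(F in edge_covers W) edge_weight mu F.
Proof.
move=> W0; rewrite nmu_sum_powerset //.
under eq_bigr => J _ do rewrite prod_mult_expand mulr_sumr.
transitivity (\sum_(J in powerset W)
   \sum_(F in powerset (pairs W) | cover F \subset J)
     (-1) ^+ (#|W| - #|J|) * edge_weight mu F).
  apply: eq_bigr => J; rewrite powersetE => sJW.
  by apply: eq_bigl => F; apply: powerset_pairs_sub.
rewrite (exchange_big_dep (mem (powerset (pairs W)))) => [|J F _ /andP[] //] /=.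
rewrite [RHS](eq_bigl (fun F => (F \in powerset (pairs W)) && (cover F == W)))
  => [|F]; last by rewrite inE.
rewrite [RHS]big_mkcondr /=.
apply: eq_bigr => F FW; have sFW : cover F \subset W by rewrite cover_pairs -?powersetE.
rewrite (eq_bigl (fun J => (J \in powerset W) && (cover F \subset J))) => [|J];
  last by rewrite FW.
by rewrite -mulr_suml sum_supersets_sign //; case: eqP; rewrite ?mul1r ?mul0r.
Qed.

Lemma edge_weightU mu F S : [disjoint F & S] ->
  edge_weight mu (F :|: S) = edge_weight mu F * edge_weight mu S.
Proof.
move=> dFS; rewrite /edge_weight -bigU //.
by apply: eq_bigl => e; rewrite !inE.
Qed.

Lemma edge_weight_ge1 mu S : {in S, forall e, 1 < mu e}%N -> 1 <= edge_weight mu S.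
Proof.
move=> mu_gt1; apply: (big_ind (fun x => 1 <= x)) => // [x y|e eS].
  exact: mulr_ege1.
by rewrite lerBrDr -PoszD lez_nat addn1 mu_gt1.
Qed.

Lemma edge_weight_ge0 mu W F : positive_mult mu -> F \subset pairs W ->
  0 <= edge_weight mu F.
Proof.
move=> mu_pos sFW; apply: prodr_ge0 => e /(subsetP sFW).
by rewrite !inE subr_ge0 lez_nat => /andP[_ /eqP/mu_pos].
Qed.

End EdgeCovers.

Lemma nmu_le_extension (T : finType) (mu : {set T} -> nat) (V W : {set T})
    (S : {set {set T}}) :
  positive_mult mu -> V != set0 -> V \subset W ->
  S \subset pairs W -> [disjoint pairs V & S] -> W \subset V :|: cover S ->
  1 <= edge_weight mu S ->
  nmu mu V <= nmu mu W.
Proof.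
move=> mu_pos V0 sVW sSW dVS sWVS wS_ge1.
have W0 : W != set0 by apply: contraNneq V0 => W0; rewrite -subset0 -W0.
have coversV F : F \in edge_covers V -> F \subset pairs V /\ cover F = V.
  by rewrite !inE => /andP[? /eqP].
have dFS F : F \in edge_covers V -> [disjoint F & S].
  by case/coversV => sFV _; apply: disjointWl dVS.
have addS_inj : {in edge_covers V &, injective (fun F => F :|: S)}.
  have dropS F : F \in edge_covers V -> (F :|: S) :\: S = F.
    by move/dFS/setDidPl; rewrite setDUl setDv setU0.
  by move=> F1 F2 /dropS dF1 /dropS dF2 /= eqFS; rewrite -dF1 eqFS dF2.
have addS_covers : (fun F => F :|: S) @: edge_covers V \subset edge_covers W.
  apply/subsetP => _ /imsetP[F /coversV[sFV covF] ->].
  rewrite !inE subUset sSW (subset_trans sFV (pairsS sVW)) /=.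
  rewrite /cover bigcup_setU -/(cover F) -/(cover S) covF eqEsubset sWVS andbT.
  by rewrite subUset sVW cover_pairs.
rewrite !nmu_edge_covers //.
apply: (le_trans (y := \sum_(F in edge_covers V) edge_weight mu (F :|: S))).
  apply: ler_sum => F FV; rewrite edge_weightU ?dFS //.
  by apply: ler_peMr => //; apply: (edge_weight_ge0 (W := V)) => //; case/coversV: FV.
rewrite -big_imset // [X in _ <= X](big_setID ((fun F => F :|: S) @: edge_covers V)) /=.
rewrite (setIidPr addS_covers) lerDl sumr_ge0 // => G; rewrite !inE.
by case/andP=> _ /andP[sGW _]; apply: edge_weight_ge0 sGW.
Qed.

Lemma connected_has_neighbour (T : finType) (mu : {set T} -> nat) (W : {set T})
    (x v : T) :
  induced_connected mu W -> x \in W -> v \in W -> x != v ->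
  exists2 u, u \in W & Gmu_edge mu v u.
Proof.
move=> connW xW vW; have [[|u p] [/= vp <- pW]] := connW v x vW xW; first by rewrite eqxx.
by case/andP: vp => vu _; case/andP: pW => uW _; exists u.
Qed.

Lemma nmu_le_connected (T : finType) (mu : {set T} -> nat) (V W : {set T}) :
  positive_mult mu -> induced_connected mu W -> V != set0 -> V \subset W ->
  nmu mu V <= nmu mu W.
Proof.
move=> mu_pos connW V0 sVW; have /set0Pn[x xV] := V0.
pose S := [set e in pairs W | (1 < mu e)%N && ~~ (e \subset V)].
apply: (nmu_le_extension (S := S)) => //.
- by apply/subsetP => e; rewrite inE => /andP[].
- rewrite -setI_eq0; apply/eqP/setP => e; rewrite !inE.
  by apply/negP => /andP[/andP[seV _] /and3P[_ _ /negP]].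
- apply/subsetP => v vW; rewrite inE; case: (boolP (v \in V)) => //= vV.
  have [|u uW /andP[vu mu_vu]] := connected_has_neighbour connW (subsetP sVW x xV) vW.
    by apply: contraNneq vV => <-.
  apply/bigcupP; exists [set v; u]; last exact: set21.
  rewrite !inE subUset !sub1set vW uW cards2 vu mu_vu /=.
  by apply/subsetP => /(_ v (set21 v u)); rewrite (negPf vV).
- by apply: edge_weight_ge1 => e; rewrite inE => /and3P[].
Qed.

Theorem lemma4p14 (T : finType) (mu : {set T} -> nat) (V' : {set T}) :
  positive_mult mu ->
  induced_connected mu [set: T] ->
  V' != set0 ->
  induced_connected mu V' ->
  nmu mu V' <= nmu mu [set: T].
Proof.
by move=> mu_pos connT V'0 _; apply: nmu_le_connected; rewrite ?subsetT.
Qed.
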